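(* For $\kappa>0$ and $0\le\rho<1$ define $$C_s^{\lim}(\kappa,\rho)=\log(1+\kappa)+\log\!\left(\frac12+\sqrt{\frac14-\frac{\rho\kappa}{(1+\kappa)^2}}\right).$$ Then for all such $\kappa$ and $\rho$, $$(1-\rho)\,C_s^{\lim}(\kappa,0)\le C_s^{\lim}(\kappa,\rho)\le C_s^{\lim}(\kappa,0).$$
   Context: $C_s^{\lim}(\kappa,\rho)$ is the high-SNR limit of the ergodic secrecy capacity of a correlated Rayleigh fading wiretap channel with average channel gain ratio $\kappa=\mathbb{E}[H_M]/\mathbb{E}[H_E]$ and power correlation coefficient $\rho$ between the main and eavesdropper channel power gains; note $C_s^{\lim}(\kappa,0)=\log(1+\kappa)$. *)

From Stdlib Require Import Reals.
Open Scope R_scope.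

Definition Cs_lim (kappa rho : R) : R :=
  ln (1 + kappa) + ln (1/2 + sqrt (1/4 - rho * kappa / (1 + kappa)^2)).

(* With c = kappa / (1 + kappa), the radicand is 1/4 - rho c (1 - c), so the second
   logarithm is nonpositive and C_s^lim(kappa, rho) <= log (1 + kappa).  For the lower
   bound, the radicand dominates (1/2 - rho c)^2 by rho (1 - rho) c^2, hence
   1/2 + sqrt(...) >= (1 - rho) * 1 + rho * (1 - c); concavity of log then gives
   log (1/2 + sqrt(...)) >= rho log (1 - c) = - rho log (1 + kappa). *)
From Stdlib Require Import Reals Lra Psatz.
Open Scope R_scope.

Lemma ln_le (x y : R) : 0 < x -> x <= y -> ln x <= ln y.
Proof.
  intros Hx [Hlt | ->]; [left; apply ln_increasing|]; lra.
Qed.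

Lemma ln_le_tangent (y z : R) : 0 < y -> 0 < z -> ln y <= ln z + y / z - 1.
Proof.
  intros Hy Hz.
  pose proof (exp_ineq1_le (ln (y / z))) as Hexp.
  rewrite exp_ln in Hexp by (apply Rdiv_lt_0_compat; lra).
  unfold Rdiv in *; rewrite ln_mult, ln_Rinv in Hexp
    by (try apply Rinv_0_lt_compat; lra).
  lra.
Qed.

(* Tangent line at the mixture m: the two tangent errors cancel in the convex combination. *)
Lemma ln_convex_comb_ge (t x y : R) :
  0 < x -> 0 < y -> 0 <= t <= 1 ->
  t * ln x + (1 - t) * ln y <= ln (t * x + (1 - t) * y).
Proof.
  intros Hx Hy Ht.
  set (m := t * x + (1 - t) * y).
  assert (Hm : 0 < m) by (unfold m; nra).
  pose proof (ln_le_tangent x m Hx Hm) as Htx.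
  pose proof (ln_le_tangent y m Hy Hm) as Hty.
  assert (Hcancel : t * (x / m - 1) + (1 - t) * (y / m - 1) = 0)
    by (unfold m in *; field; lra).
  nra.
Qed.

Lemma sqrt_quarter_sub_le_half (x : R) : 0 <= x -> sqrt (1/4 - x) <= 1/2.
Proof.
  intros Hx.
  rewrite <- (sqrt_square (1/2)) by lra.
  apply sqrt_le_1_alt; lra.
Qed.

Lemma half_sub_le_sqrt_quarter (rho c : R) :
  0 <= rho <= 1 -> 0 <= c ->
  1/2 - rho * c <= sqrt (1/4 - rho * (c * (1 - c))).
Proof.
  intros Hr Hc.
  destruct (Rle_or_lt (1/2 - rho * c) 0) as [Hneg | Hpos].
  - pose proof (sqrt_pos (1/4 - rho * (c * (1 - c)))); lra.
  - rewrite <- (sqrt_square (1/2 - rho * c)) at 1 by lra.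
    apply sqrt_le_1_alt.
    assert (0 <= rho * (1 - rho) * (c * c)) by (apply Rmult_le_pos; nra).
    nra.
Qed.

Lemma Cs_lim_rho0 (kappa : R) : 0 < kappa -> Cs_lim kappa 0 = ln (1 + kappa).
Proof.
  intros Hk; unfold Cs_lim.
  replace (1/4 - 0 * kappa / (1 + kappa)^2) with (1/2 * (1/2)) by (field; lra).
  rewrite sqrt_square by lra.
  replace (1/2 + 1/2) with 1 by lra.
  rewrite ln_1; lra.
Qed.

Lemma Cs_lim_rho_frac (kappa rho : R) : 0 < kappa ->
  let c := kappa / (1 + kappa) in
  Cs_lim kappa rho = ln (1 + kappa) + ln (1/2 + sqrt (1/4 - rho * (c * (1 - c)))).
Proof.
  intros Hk c; unfold Cs_lim, c.
  do 4 f_equal; field; lra.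
Qed.

Theorem corollary1 (kappa rho : R) (hk : 0 < kappa) (hr0 : 0 <= rho) (hr1 : rho < 1) :
  (1 - rho) * Cs_lim kappa 0 <= Cs_lim kappa rho /\ Cs_lim kappa rho <= Cs_lim kappa 0.
Proof.
  rewrite Cs_lim_rho0, Cs_lim_rho_frac by lra.
  set (c := kappa / (1 + kappa)).
  assert (H1c : 1 - c = / (1 + kappa)) by (unfold c; field; lra).
  assert (Hc : 0 <= c < 1).
  { split; [left; apply Rdiv_lt_0_compat; lra|].
    pose proof (Rinv_0_lt_compat (1 + kappa)); lra. }
  assert (Hln1c : ln (1 - c) = - ln (1 + kappa))
    by (rewrite H1c; apply ln_Rinv; lra).
  set (r := rho * (c * (1 - c))).
  assert (Hr : 0 <= r) by (unfold r; apply Rmult_le_pos; nra).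
  pose proof (sqrt_pos (1/4 - r)) as Hsqrt.
  split.
  - assert (Hmix : (1 - rho) * 1 + rho * (1 - c) <= 1/2 + sqrt (1/4 - r))
      by (pose proof (half_sub_le_sqrt_quarter rho c); unfold r in *; lra).
    assert (Hconc : (1 - rho) * ln 1 + rho * ln (1 - c)
                    <= ln ((1 - rho) * 1 + rho * (1 - c))).
    { replace rho with (1 - (1 - rho)) at 2 4 by lra.
      apply ln_convex_comb_ge; lra. }
    assert (Hmix_pos : 0 < (1 - rho) * 1 + rho * (1 - c)) by nra.
    pose proof (ln_le _ _ Hmix_pos Hmix).
    rewrite ln_1, Hln1c in Hconc; lra.
  - pose proof (sqrt_quarter_sub_le_half r Hr).
    pose proof (ln_le (1/2 + sqrt (1/4 - r)) 1 ltac:(lra) ltac:(lra)).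
    rewrite ln_1 in *; lra.
Qed.
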